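(* Let $T$ be a finite nonempty set with a metric $\mathrm{dist}$, let $\Gamma:\mathbb{R}\to[0,1]$ be nondecreasing and subadditive with $\Gamma(x)=0$ iff $x=0$, and set $\gamma_{uv}=\Gamma(\mathrm{dist}(u,v))$ for $u,v\in T$. Let $\widehat\phi\in\mathbb{R}^{T}$, $\delta>0$, $$\mathcal{U}_{\mathrm{SB}}=\{\phi\in[0,1]^{T}:\ |\phi_v-\widehat\phi_v|\le\delta\ \ \forall v\in T,\ \ |\phi_v-\phi_u|\le\gamma_{vu}\ \ \forall u,v\in T\},$$ assumed nonempty, and let $\underline\phi_v=\max_{u\in T}\{\underline\phi^0_u-\gamma_{uv}\}$, $\bar\phi_v=\min_{u\in T}\{\bar\phi^0_u+\gamma_{vu}\}$ for $v\in T$, where $\underline\phi^0_u=\max\{0,\widehat\phi_u-\delta\}$ and $\bar\phi^0_u=\min\{1,\widehat\phi_u+\delta\}$. Then for all $u,v\in T$, $$P_{\{v,u\}}(\mathcal{U}_{\mathrm{SB}})=\{(\phi_v,\phi_u):\ \underline\phi_v\le\phi_v\le\bar\phi_v,\ \ \underline\phi_u\le\phi_u\le\bar\phi_u,\ \ |\phi_v-\phi_u|\le\gamma_{vu}\}.$$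
   Context: For $S\subseteq\mathbb{R}^{T}$ and $I\subseteq T$, $P_I(S)=\{\phi_I:\phi\in S\}$ denotes the projection of $S$ onto the coordinates in $I$. *)

From HB Require Import structures.
From mathcomp Require Import all_boot all_order all_algebra.
From mathcomp Require Import reals.
Set Implicit Arguments. Unset Strict Implicit. Unset Printing Implicit Defensive.
Import Order.TTheory GRing.Theory Num.Theory.
Local Open Scope ring_scope.

Section Defs.
Variables (R : realType) (T : finType).

(* maximum / minimum of f over the finite type T; the seed f t0 is itself one
   of the terms, so the value is the true max / min over T for any t0. *)
Definition maxT (f : T -> R) (t0 : T) : R := \big[Num.max/f t0]_(u : T) f u.
Definition minT (f : T -> R) (t0 : T) : R := \big[Num.min/f t0]_(u : T) f u.

Definition gam (Gamma : R -> R) (dist : T -> T -> R) (u v : T) : R :=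
  Gamma (dist u v).

Definition U_SB (Gamma : R -> R) (dist : T -> T -> R) (phihat : T -> R)
    (delta : R) (phi : T -> R) : Prop :=
  (forall v, 0 <= phi v <= 1) /\
  (forall v, `|phi v - phihat v| <= delta) /\
  (forall u v, `|phi v - phi u| <= gam Gamma dist v u).

Definition phi0_lo (phihat : T -> R) (delta : R) (u : T) : R :=
  Num.max 0 (phihat u - delta).
Definition phi0_up (phihat : T -> R) (delta : R) (u : T) : R :=
  Num.min 1 (phihat u + delta).

Definition phi_lo (Gamma : R -> R) (dist : T -> T -> R) (phihat : T -> R)
    (delta : R) (v : T) : R :=
  maxT (fun u => phi0_lo phihat delta u - gam Gamma dist u v) v.
Definition phi_up (Gamma : R -> R) (dist : T -> T -> R) (phihat : T -> R)
    (delta : R) (v : T) : R :=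
  minT (fun u => phi0_up phihat delta u + gam Gamma dist v u) v.

End Defs.

(* The constraints defining U_SB are a box [lo0, up0] (lo0 = max 0 (phihat - delta),
   up0 = min 1 (phihat + delta)) plus the Lipschitz condition with respect to the
   gauge gamma, which is reflexive, symmetric and satisfies the triangle inequality
   because Gamma is monotone and subadditive.  Every feasible phi lies between the
   envelopes [phi_lo] and [phi_up], which are themselves gamma-Lipschitz.  Conversely,
   prescribed compatible values a at v and b at u extend by the McShane-type formula
   w |-> max (a - gamma_vw) (b - gamma_uw), clamped between the two envelopes. *)

From HB Require Import structures.
From mathcomp Require Import all_boot all_order all_algebra.
From mathcomp Require Import reals.
From mathcomp Require Import lra.
Set Implicit Arguments. Unset Strict Implicit. Unset Printing Implicit Defensive.
Import Order.TTheory GRing.Theory Num.Theory.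
Local Open Scope ring_scope.

Section FiniteExtrema.
Variables (R : realType) (T : finType).

Lemma maxT_ub (f : T -> R) t0 u : f u <= maxT f t0.
Proof.
rewrite /maxT; have : u \in index_enum T by apply: mem_index_enum.
elim: (index_enum T) => [//|i r IHr]; rewrite big_cons inE => /orP[/eqP->|ur].
  by rewrite le_max lexx.
by rewrite le_max IHr ?orbT.
Qed.

Lemma maxT_lub (f : T -> R) t0 c : (forall u, f u <= c) -> maxT f t0 <= c.
Proof.
by move=> fc; apply: (big_ind (fun x => x <= c)) => // x y; rewrite ge_max => -> ->.
Qed.

Lemma minT_lb (f : T -> R) t0 u : minT f t0 <= f u.
Proof.
rewrite /minT; have : u \in index_enum T by apply: mem_index_enum.
elim: (index_enum T) => [//|i r IHr]; rewrite big_cons inE => /orP[/eqP->|ur].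
  by rewrite ge_min lexx.
by rewrite ge_min IHr ?orbT.
Qed.

Lemma minT_glb (f : T -> R) t0 c : (forall u, c <= f u) -> c <= minT f t0.
Proof.
by move=> cf; apply: (big_ind (fun x => c <= x)) => // x y; rewrite le_min => -> ->.
Qed.

End FiniteExtrema.

Lemma le_maxD (R : realDomainType) (x1 x2 y1 y2 c : R) :
  x1 <= y1 + c -> x2 <= y2 + c -> Num.max x1 x2 <= Num.max y1 y2 + c.
Proof. by move=> h1 h2; case: (leP x1 x2); case: (leP y1 y2) => *; lra. Qed.

Lemma le_minD (R : realDomainType) (x1 x2 y1 y2 c : R) :
  x1 <= y1 + c -> x2 <= y2 + c -> Num.min x1 x2 <= Num.min y1 y2 + c.
Proof. by move=> h1 h2; case: (leP x1 x2); case: (leP y1 y2) => *; lra. Qed.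

Section GaugeBand.
Variables (R : realType) (T : finType) (g : T -> T -> R) (lo0 up0 : T -> R).
Hypothesis g_refl : forall x, g x x = 0.
Hypothesis gC : forall x y, g x y = g y x.
Hypothesis g_triangle : forall x y z, g x z <= g x y + g y z.

Definition lipschitz (f : T -> R) := forall x y, f x <= f y + g x y.

Definition admissible (f : T -> R) :=
  (forall w, lo0 w <= f w <= up0 w) /\ lipschitz f.

Definition lower_env (v : T) := maxT (fun u => lo0 u - g u v) v.
Definition upper_env (v : T) := minT (fun u => up0 u + g v u) v.

Lemma lipschitzE f : lipschitz f <-> forall x y, `|f x - f y| <= g x y.
Proof.
split=> fL x y; last by have := fL x y; rewrite ler_norml => /andP[]; lra.
by rewrite ler_norml; have := fL x y; have := fL y x; rewrite gC => ??; apply/andP; lra.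
Qed.

Lemma lipschitz_max f h :
  lipschitz f -> lipschitz h -> lipschitz (fun w => Num.max (f w) (h w)).
Proof. by move=> fL hL x y; apply: le_maxD. Qed.

Lemma lipschitz_min f h :
  lipschitz f -> lipschitz h -> lipschitz (fun w => Num.min (f w) (h w)).
Proof. by move=> fL hL x y; apply: le_minD. Qed.

Lemma lipschitz_cone c v : lipschitz (fun w => c - g v w).
Proof. by move=> x y /=; have := g_triangle v x y; lra. Qed.

Lemma lo0_le_lower_env w : lo0 w <= lower_env w.
Proof. by have := maxT_ub (fun u => lo0 u - g u w) w w; rewrite /= g_refl subr0. Qed.

Lemma upper_env_le_up0 w : upper_env w <= up0 w.
Proof. by have := minT_lb (fun u => up0 u + g w u) w w; rewrite /= g_refl addr0. Qed.

Lemma lipschitz_lower_env : lipschitz lower_env.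
Proof.
move=> x y; apply: maxT_lub => w /=.
have := maxT_ub (fun u => lo0 u - g u y) y w; have := g_triangle w x y.
by rewrite /lower_env /=; lra.
Qed.

Lemma lipschitz_upper_env : lipschitz upper_env.
Proof.
move=> x y; rewrite -lerBlDr; apply: minT_glb => w /=.
have := minT_lb (fun u => up0 u + g x u) x w; have := g_triangle x y w.
by rewrite /upper_env /=; lra.
Qed.

Lemma admissible_env_bounds f :
  admissible f -> forall w, lower_env w <= f w <= upper_env w.
Proof.
move=> [fb fL] w; apply/andP; split.
- by apply: maxT_lub => x /=; have /andP[? _] := fb x; have := fL x w; lra.
- by apply: minT_glb => x /=; have /andP[_ ?] := fb x; have := fL w x; lra.
Qed.

Lemma admissible_extension u v a b :
  (forall w, lower_env w <= upper_env w) ->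
  lower_env v <= a <= upper_env v -> lower_env u <= b <= upper_env u ->
  `|a - b| <= g v u ->
  exists f, admissible f /\ f v = a /\ f u = b.
Proof.
move=> env_le av bu; rewrite ler_norml => /andP[gab abg].
pose clamp w c := Num.max (lower_env w) (Num.min (upper_env w) c).
have clamp_id w c : lower_env w <= c <= upper_env w -> clamp w c = c.
  by move=> /andP[Lc cU]; rewrite /clamp (min_idPr cU) (max_idPr Lc).
pose cone w := Num.max (a - g v w) (b - g u w).
have cone_v : cone v = a.
  by rewrite /cone g_refl subr0; apply/max_idPl; have := gC u v; lra.
have cone_u : cone u = b.
  by rewrite /cone g_refl subr0; apply/max_idPr; lra.
exists (fun w => clamp w (cone w)); split; last by rewrite cone_v cone_u !clamp_id.
split=> [w|].
- have lo0L := lo0_le_lower_env w; have Uup0 := upper_env_le_up0 w.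
  have /andP[Lc cU] : lower_env w <= clamp w (cone w) <= upper_env w.
    by rewrite /clamp le_max lexx ge_max env_le ge_min lexx.
  by apply/andP; split; lra.
- apply: lipschitz_max; first exact: lipschitz_lower_env.
  apply: lipschitz_min; first exact: lipschitz_upper_env.
  by apply: lipschitz_max; apply: lipschitz_cone.
Qed.

Lemma admissible_proj2 u v a b :
  (exists f, admissible f) ->
  (exists f, admissible f /\ f v = a /\ f u = b) <->
  lower_env v <= a <= upper_env v /\ lower_env u <= b <= upper_env u /\
  `|a - b| <= g v u.
Proof.
move=> [f0 f0_adm]; split=> [[f [f_adm [<- <-]]] | [av [bu ab]]].
  by split; [|split]; [exact: admissible_env_bounds.. | case: f_adm => _ /lipschitzE; apply].
apply: admissible_extension => // w.
by have /andP[] := admissible_env_bounds f0_adm w; apply: le_trans.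
Qed.

End GaugeBand.

Lemma clamped_boxE (R : realDomainType) (x c d : R) :
  (0 <= x <= 1) && (`|x - c| <= d) = (Num.max 0 (c - d) <= x <= Num.min 1 (c + d)).
Proof.
rewrite ge_max le_min ler_norml lerBrDr lerBlDr [- d + c]addrC [d + c]addrC -!andbA.
by rewrite (andbCA (x <= 1)).
Qed.

Lemma gam_triangle (R : realType) (T : finType) (Gamma : R -> R) (dist : T -> T -> R) :
  (forall x y, 0 <= x -> x <= y -> Gamma x <= Gamma y) ->
  (forall x y, 0 <= x -> 0 <= y -> Gamma (x + y) <= Gamma x + Gamma y) ->
  (forall u v, 0 <= dist u v) ->
  (forall u v w, dist u w <= dist u v + dist v w) ->
  forall x y z, gam Gamma dist x z <= gam Gamma dist x y + gam Gamma dist y z.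
Proof.
move=> Gamma_mono Gamma_subadd dist_ge0 dist_tri x y z; rewrite /gam.
by apply: le_trans (Gamma_subadd _ _ (dist_ge0 x y) (dist_ge0 y z)); apply: Gamma_mono.
Qed.

Lemma U_SB_admissible (R : realType) (T : finType) (Gamma : R -> R)
    (dist : T -> T -> R) (phihat : T -> R) (delta : R) (phi : T -> R) :
  (forall x y, gam Gamma dist x y = gam Gamma dist y x) ->
  U_SB Gamma dist phihat delta phi <->
  admissible (gam Gamma dist) (phi0_lo phihat delta) (phi0_up phihat delta) phi.
Proof.
move=> gamC; rewrite /U_SB /admissible /phi0_lo /phi0_up.
split=> [[phi01 [phi_near phiL]] | [phi_box /(lipschitzE gamC) phiL]].
  by split=> [w|]; [rewrite -clamped_boxE phi01 phi_near | exact/(lipschitzE gamC)].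
by split; [|split] => // w; have := phi_box w; rewrite -clamped_boxE => /andP[].
Qed.

Theorem proposition2p2 (R : realType) (T : finType) (dist : T -> T -> R)
  (Gamma : R -> R) (phihat : T -> R) (delta : R) :
  (0 < #|T|)%N ->
  (forall u v, 0 <= dist u v) ->
  (forall u v, dist u v = 0 <-> u = v) ->
  (forall u v, dist u v = dist v u) ->
  (forall u v w, dist u w <= dist u v + dist v w) ->
  (forall x, 0 <= x -> 0 <= Gamma x <= 1) ->
  (forall x y, 0 <= x -> x <= y -> Gamma x <= Gamma y) ->
  (forall x y, 0 <= x -> 0 <= y -> Gamma (x + y) <= Gamma x + Gamma y) ->
  (forall x, 0 <= x -> (Gamma x = 0 <-> x = 0)) ->
  0 < delta ->
  (exists phi : T -> R, U_SB Gamma dist phihat delta phi) ->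
  forall u v : T, forall a b : R,
    (exists phi : T -> R, U_SB Gamma dist phihat delta phi /\
                          phi v = a /\ phi u = b)
    <->
    (phi_lo Gamma dist phihat delta v <= a <= phi_up Gamma dist phihat delta v /\
     phi_lo Gamma dist phihat delta u <= b <= phi_up Gamma dist phihat delta u /\
     `|a - b| <= gam Gamma dist v u).
Proof.
move=> _ dist_ge0 dist0 distC dist_tri _ Gamma_mono Gamma_subadd Gamma0 _.
move=> [phi0 U_SB_phi0] u v a b.
have gam_refl x : gam Gamma dist x x = 0.
  by rewrite /gam (proj2 (dist0 x x)) // (proj2 (Gamma0 0 (lexx 0))).
have gamC x y : gam Gamma dist x y = gam Gamma dist y x by rewrite /gam distC.
have gam_tri := gam_triangle Gamma_mono Gamma_subadd dist_ge0 dist_tri.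
have U_SB_adm := U_SB_admissible phihat delta _ gamC.
have nonempty : exists f, admissible (gam Gamma dist) (phi0_lo phihat delta)
                                     (phi0_up phihat delta) f.
  by exists phi0; apply/U_SB_adm.
apply: (iff_trans _ (admissible_proj2 gam_refl gamC gam_tri u v a b nonempty)).
by split=> -[phi [/U_SB_adm phi_ok phi_vu]]; exists phi.
Qed.
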